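(* Let $(P,F)$ be a convex Fuchsian polyhedron in $\mathbb{H}^3$ with invariant plane $\Pi$, and let $Z$ be a Fuchsian deformation of $(P,F)$, with Fuchsian Killing fields $\vec f$ ($f\in F$) such that $Z(fy)=df(\vec f(y)+Z(y))$ for all $y\in P$. Let $Z_h$ be the horizontal component of $Z$. Then $Z_h$ is equivariant under $F$: $Z_h(fy)=df(\vec f(y)+Z_h(y))$ for all $f\in F$ and $y\in P$.
   Context: A convex Fuchsian polyhedron is a pair $(P,F)$ where $P$ is a convex polyhedral surface in $\mathbb{H}^3$ (boundary of a locally finite intersection of half-spaces) and $F$ is a discrete group of orientation-preserving isometries leaving invariant a totally geodesic plane $\Pi$, acting cocompactly without fixed points on $\Pi$, with $F(P)=P$ and $F$ acting freely on $P$. An infinitesimal isometric deformation of $P$ is a triangulation of the faces of $P$ with no new vertices plus a Killing field of $\mathbb{H}^3$ on each triangle, coinciding on common edges; it gives a vector field $Z$ on $P$. A Fuchsian Killing field is the extension of a Killing field $K$ of $\Pi$ defined by: at $x$ at distance $d$ from $\Pi$, with $p_d$ the orthogonal projection onto $\Pi$ of the equidistant surface at distance $d$ through $x$, its value is $(dp_d)^{-1}(K(p_d(x)))$. A Fuchsian deformation is an infinitesimal isometric deformation $Z$ such that for each $f\in F$ there is a Fuchsian Killing field $\vec f$ with $Z(fy)=df(\vec f(y)+Z(y))$ for all $y\in P$. At $x\in P$ the vertical direction is the tangent direction at $x$ of the geodesic through $x$ orthogonal to $\Pi$; horizontal directions are orthogonal to it, and $Z_h$ is the orthogonal projection of $Z$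 onto the horizontal plane. *)

(* Model: the hyperboloid model of H^3 inside Minkowski space R^{3,1},
   points/vectors are column vectors 'cV[R]_4, the last coordinate is timelike. *)
From HB Require Import structures.
From mathcomp Require Import all_boot all_order all_algebra.
From mathcomp Require Import all_classical all_reals all_analysis.
Set Implicit Arguments. Unset Strict Implicit. Unset Printing Implicit Defensive.
Import Order.TTheory GRing.Theory Num.Theory.
Import numFieldNormedType.Exports.
Local Open Scope classical_set_scope.
Local Open Scope ring_scope.

Section Hyperbolic.
Variable R : realType.

Definition vec := 'cV[R]_4.
Definition mat := 'M[R]_4.

Definition mink (x y : vec) : R :=
  \sum_(i < 4) (if val i == 3%N then -1 else 1) * x i ord0 * y i ord0.

Definition H3 : set vec := [set x | mink x x = -1 /\ 0 < x (inord 3) ord0].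

(* hyperbolic ball around x: points at distance < acosh c *)
Definition hball (x : vec) (c : R) : set vec := [set y | H3 y /\ - mink x y < c].

(* isometries of H^3 (acting linearly; df = f), orientation preserving *)
Definition isometry (A : mat) : Prop :=
  (forall x y, mink (A *m x) (A *m y) = mink x y) /\
  (forall x, H3 x -> H3 (A *m x)).
Definition or_isometry (A : mat) : Prop := isometry A /\ \det A = 1.

(* Killing fields of H^3: x |-> X x with X in so(3,1) *)
Definition killing (X : mat) : Prop :=
  forall x y, mink (X *m x) y + mink x (X *m y) = 0.

Definition unit_spacelike (e : vec) : Prop := mink e e = 1.
Definition plane (e : vec) : set vec := [set x | H3 x /\ mink x e = 0].
Definition halfspace (e : vec) : set vec := [set x | H3 x /\ mink x e <= 0].

Definition inter_half (I : Type) (n : I -> vec) : set vec :=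
  [set x | H3 x /\ forall i, mink x (n i) <= 0].
Definition locally_finite (I : Type) (n : I -> vec) : Prop :=
  forall x, H3 x -> exists c : R, 1 < c /\
    finite_set [set i | exists y, hball x c y /\ plane (n i) y].
Definition surface (I : Type) (n : I -> vec) : set vec :=
  [set x | inter_half n x /\
     forall c : R, 1 < c -> exists y, hball x c y /\ ~ inter_half n y].

Definition is_group (F : set mat) : Prop :=
  F 1%:M /\ (forall f g, F f -> F g -> F (f *m g)) /\
  (forall f, F f -> f \in unitmx /\ F (invmx f)).
Definition discrete (F : set mat) : Prop :=
  exists eps : R, 0 < eps /\ forall f, F f -> `|f - 1%:M| < eps -> f = 1%:M.
Definition acts_on (f : mat) (A : set vec) : set vec := (fun x => f *m x) @` A.
Definition cocompact_on (F : set mat) (A : set vec) : Prop :=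
  exists K : set vec, compact K /\ K `<=` A /\
    A `<=` \bigcup_(f in F) acts_on f K.
Definition acts_freely_on (F : set mat) (A : set vec) : Prop :=
  forall f x, F f -> A x -> f *m x = x -> f = 1%:M.

(* convex Fuchsian polyhedron (P, F) with invariant plane of normal e,
   where P = surface n *)
Definition fuchsian_polyhedron (e : vec) (I : Type) (n : I -> vec)
    (F : set mat) : Prop :=
  [/\ unit_spacelike e,
      (forall i, unit_spacelike (n i)) /\ locally_finite n,
      is_group F /\ (forall f, F f -> or_isometry f) /\ discrete F,
      (forall f, F f -> acts_on f (plane e) = plane e) /\
        cocompact_on F (plane e) /\ acts_freely_on F (plane e) &
      (forall f, F f -> acts_on f (surface n) = surface n) /\
        acts_freely_on F (surface n)].

(* vertices of P: extreme points of the convex set (geodesic segments in the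
   hyperboloid model are projectivized linear segments) *)
Definition vertex (I : Type) (n : I -> vec) (x : vec) : Prop :=
  inter_half n x /\
  ~ (exists p q (a lam : R), inter_half n p /\ inter_half n q /\ p != q /\
       0 < a < 1 /\ 0 < lam /\ x = lam *: (a *: p + (1 - a) *: q)).

(* geodesic triangle with vertices v 0, v 1, v 2; hull_on S restricts to the
   vertices satisfying S (used for common edges / vertices) *)
Definition hull_on (v : 'I_3 -> vec) (S : set vec) : set vec :=
  [set x | H3 x /\ exists c : 'I_3 -> R, (forall j, 0 <= c j) /\
     (forall j, 0 < c j -> S (v j)) /\ x = \sum_(j < 3) c j *: v j].
Definition triangle (v : 'I_3 -> vec) : set vec := hull_on v setT.

Definition triangulation (I : Type) (n : I -> vec) (K : Type)
    (tri : K -> 'I_3 -> vec) : Prop :=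
  [/\ (forall k j, vertex n (tri k j)),
      (forall k (c : 'I_3 -> R), \sum_(j < 3) c j *: tri k j = 0 ->
          forall j, c j = 0),
      (forall k, exists i, forall j, mink (tri k j) (n i) = 0),
      surface n = \bigcup_(k in setT) triangle (tri k) &
      (forall k l, k <> l -> triangle (tri k) `&` triangle (tri l) =
          hull_on (tri k) (range (tri l)))].

Definition inf_iso_deformation (I : Type) (n : I -> vec) (Z : vec -> vec)
    : Prop :=
  exists (K : Type) (tri : K -> 'I_3 -> vec) (X : K -> mat),
    triangulation n tri /\ (forall k, killing (X k)) /\
    forall k x, triangle (tri k) x -> Z x = X k *m x.

(* orthogonal projection onto the plane of normal e (of every equidistant
   surface through x, x |-> p_d(x)) *)
Definition proj (e : vec) (x : vec) : vec :=
  (Num.sqrt (1 + mink x e ^+ 2))^-1 *: (x - mink x e *: e).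

Definition plane_killing (e : vec) (Y : mat) : Prop := killing Y /\ Y *m e = 0.

(* V is the Fuchsian Killing field extending the Killing field Y of Pi:
   V x is tangent at x to the equidistant surface through x
   (mink v x = 0 and mink v e = 0) and d(p_d)(V x) = Y (p_d x). *)
Definition fuchsian_killing (e : vec) (V : vec -> vec) : Prop :=
  exists Y, plane_killing e Y /\ forall x, H3 x ->
    [/\ mink (V x) x = 0, mink (V x) e = 0 &
        'D_(V x) (proj e) x = Y *m proj e x].

(* vertical direction at x: tangent at x of the geodesic through x orthogonal
   to Pi (it lies in span(x, e) and is orthogonal to x) *)
Definition vertical (e : vec) (x : vec) : vec := e + mink x e *: x.
Definition horiz (e : vec) (Z : vec -> vec) (x : vec) : vec :=
  Z x - (mink (Z x) (vertical e x) / mink (vertical e x) (vertical e x))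
          *: vertical e x.

End Hyperbolic.

From Pilot Require Import Defs.
From HB Require Import structures.
From mathcomp Require Import all_boot all_order all_algebra.
From mathcomp Require Import all_classical all_reals all_analysis.
From mathcomp Require Import ring lra.
Set Implicit Arguments. Unset Strict Implicit. Unset Printing Implicit Defensive.
Import Order.TTheory GRing.Theory Num.Theory.
Local Open Scope classical_set_scope.
Local Open Scope ring_scope.

(* Since F preserves the plane Pi, each f in F maps its normal e to a multiple
   of itself: f^-1 e is Minkowski-orthogonal to every point of Pi, and these
   span e^perp. Hence f maps the vertical direction at y to a multiple of the
   vertical direction at f y, and so commutes with the projection Z |-> Z_h
   onto the horizontal plane. The Fuchsian Killing field is tangent to the
   equidistant surfaces, hence already horizontal, and passes through the
   projection unchanged. *)

Section Minkowski.
Variable R : realType.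
Implicit Types (e p x y z u v w : vec R) (a l : R).

Lemma minkC x y : mink x y = mink y x.
Proof. by apply: eq_bigr => i _; rewrite -!mulrA [y i ord0 * _]mulrC. Qed.

Lemma minkDl x y z : mink (x + y) z = mink x z + mink y z.
Proof.
by rewrite /mink -big_split; apply: eq_bigr => i _; rewrite !mxE mulrDr mulrDl.
Qed.

Lemma minkBl x y z : mink (x - y) z = mink x z - mink y z.
Proof.
by rewrite /mink -sumrB; apply: eq_bigr => i _; rewrite !mxE mulrBr mulrBl.
Qed.

Lemma minkZl a x y : mink (a *: x) y = a * mink x y.
Proof.
by rewrite /mink mulr_sumr; apply: eq_bigr => i _; rewrite !mxE !mulrA [_ * a]mulrC.
Qed.

Lemma minkDr x y z : mink z (x + y) = mink z x + mink z y.
Proof. by rewrite minkC minkDl !(minkC z). Qed.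

Lemma minkBr x y z : mink z (x - y) = mink z x - mink z y.
Proof. by rewrite minkC minkBl !(minkC z). Qed.

Lemma minkZr a x y : mink y (a *: x) = a * mink y x.
Proof. by rewrite minkC minkZl minkC. Qed.

Lemma mink_deltal (i : 'I_4) w :
  mink (delta_mx i ord0) w = (if val i == 3%N then -1 else 1) * w i ord0.
Proof.
rewrite /mink (bigD1 i) //= big1 ?addr0 ?mxE ?eqxx ?mulr1 // => k ki.
by rewrite mxE eq_sym (negbTE ki) mulr0 mul0r.
Qed.

Lemma mink_nondeg w : (forall z, mink z w = 0) -> w = 0.
Proof.
move=> w_orth; apply/matrixP => i j; rewrite (ord1 j) mxE.
have /eqP := w_orth (delta_mx i ord0).
by rewrite mink_deltal mulf_eq0; case: ifP => _; rewrite ?oppr_eq0 oner_eq0 => /eqP.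
Qed.

Lemma timelike_time_neq0 x : mink x x < 0 -> x (inord 3) ord0 != 0.
Proof.
apply: contraTneq => x3; rewrite -leNgt; apply: sumr_ge0 => i _.
case: ifP => [/eqP i3 | _]; last by rewrite mul1r -expr2 sqr_ge0.
have -> : i = inord 3 by apply: val_inj; rewrite /= inordK.
by rewrite x3 !mulr0.
Qed.

Lemma timelike_scale_H3 x : mink x x < 0 -> exists2 c, c != 0 & H3 (c *: x).
Proof.
move=> x_tl; set s := Num.sqrt (- mink x x).
have s_gt0 : 0 < s by rewrite sqrtr_gt0 oppr_gt0.
have xx : mink x x = - s ^+ 2 by rewrite sqr_sqrtr ?opprK // oppr_ge0 ltW.
have H3_scale c : c ^+ 2 = s ^- 2 -> 0 < c * x (inord 3) ord0 -> H3 (c *: x).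
  move=> cc c_time; split; last by rewrite mxE.
  by rewrite minkZl minkZr mulrA -expr2 cc xx mulrN mulVf // expf_neq0 // gt_eqF.
have [x3_lt0 | x3_gt0 | /eqP] := ltgtP (x (inord 3) ord0) 0; last first.
- by rewrite (negbTE (timelike_time_neq0 x_tl)).
- exists s^-1; first by rewrite invr_eq0 gt_eqF.
  by apply: H3_scale; rewrite ?exprVn // mulr_gt0 ?invr_gt0.
- exists (- s^-1); first by rewrite oppr_eq0 invr_eq0 gt_eqF.
  by apply: H3_scale; rewrite ?sqrrN ?exprVn // mulNr -mulrN mulr_gt0 ?invr_gt0 ?oppr_gt0.
Qed.

Definition orth_comp v w : vec R := w - (mink w v / mink v v) *: v.

Lemma orth_comp_orth v w : mink v v != 0 -> mink (orth_comp v w) v = 0.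
Proof. by move=> vv; rewrite minkBl minkZl mulfVK ?subrr. Qed.

Lemma mink_orth_comp_self v w : mink v v != 0 ->
  mink (orth_comp v w) (orth_comp v w) = mink w w - mink w v ^+ 2 / mink v v.
Proof.
move=> vv; rewrite {2}/orth_comp minkBr minkZr orth_comp_orth // mulr0 subr0.
by rewrite /orth_comp minkBl minkZl (minkC v) mulrAC expr2.
Qed.

Lemma orth_compZ l v w : l != 0 -> orth_comp (l *: v) w = orth_comp v w.
Proof.
move=> l0; have [vv0 | vv] := eqVneq (mink v v) 0.
  by rewrite /orth_comp minkZl !minkZr vv0 !mulr0 invr0 !mulr0 !scale0r.
rewrite /orth_comp minkZl !minkZr scalerA; congr (_ - _ *: _); field.
by rewrite vv l0.
Qed.

(* [isometry] alone would resolve to mathcomp's isometries of sesquilinear forms. *)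
Lemma orth_comp_mulmx (f : mat R) v w : Defs.isometry f ->
  orth_comp (f *m v) (f *m w) = f *m orth_comp v w.
Proof. by case=> f_mink _; rewrite /orth_comp !f_mink mulmxBr scalemxAr. Qed.

Lemma orth_compDl u v w :
  mink u v = 0 -> orth_comp v (u + w) = u + orth_comp v w.
Proof. by move=> uv; rewrite /orth_comp minkDl uv add0r addrA. Qed.

Lemma spacelike_orth_timelike e :
  0 < mink e e -> exists2 p, mink p p < 0 & mink p e = 0.
Proof.
move=> e_sl; set t := delta_mx (inord 3) ord0 : vec R.
have tt : mink t t = -1 by rewrite mink_deltal /= inordK // mxE !eqxx mulr1.
exists (orth_comp e t); last by rewrite orth_comp_orth ?gt_eqF.
rewrite mink_orth_comp_self ?gt_eqF // tt.
have : 0 <= mink t e ^+ 2 / mink e e by rewrite divr_ge0 ?sqr_ge0 ?ltW.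
lra.
Qed.

Lemma timelike_orth_span e p u : mink p p < 0 -> mink p e = 0 ->
  (forall x, mink x x < 0 -> mink x e = 0 -> mink x u = 0) ->
  forall w, mink w e = 0 -> mink w u = 0.
Proof.
move=> p_tl pe u_orth w we.
have pp0 : mink p p != 0 by rewrite lt_eqF.
set w' := orth_comp p w.
have w'p : mink w' p = 0 by rewrite orth_comp_orth.
have w'e : mink w' e = 0 by rewrite minkBl minkZl we pe mulr0 subrr.
have w_dec : w = w' + (mink w p / mink p p) *: p by rewrite subrK.
clearbody w'.
(* For [a] this large, [a *: p + w'] is a timelike vector of [e]^perp. *)
set a := 1 + `|mink w' w'| / - mink p p.
have x_tl : mink (a *: p + w') (a *: p + w') < 0.
  rewrite !minkDl !minkDr !minkZl !minkZr (minkC p) w'p !mulr0 !addr0 add0r.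
  have a_ge1 : 1 <= a by rewrite lerDl divr_ge0 // oppr_ge0 ltW.
  have ap : a * - mink p p = - mink p p + `|mink w' w'|.
    by rewrite mulrDl mul1r divfK // oppr_eq0.
  move: (ler_norm (mink w' w')) (normr_ge0 (mink w' w')); nra.
have := u_orth _ x_tl; rewrite !minkDl !minkZl pe w'e mulr0 add0r.
rewrite (u_orth p) // mulr0 add0r => /(_ erefl) w'u.
by rewrite w_dec minkDl minkZl w'u (u_orth p) // mulr0 addr0.
Qed.

Section UnitNormal.
Variable e : vec R.
Hypothesis e_unit : mink e e = 1.

Lemma orth_normal_colinear u :
  (forall w, mink w e = 0 -> mink w u = 0) -> u = mink u e *: e.
Proof.
move=> u_orth; apply/eqP; rewrite -subr_eq0; apply/eqP/mink_nondeg => z.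
have := u_orth (z - mink z e *: e).
rewrite minkBl minkZl e_unit mulr1 subrr => /(_ erefl).
rewrite minkBl minkZl minkBr minkZr (minkC e u); lra.
Qed.

Lemma plane_orth_colinear u :
  (forall x, plane e x -> mink x u = 0) -> u = mink u e *: e.
Proof.
move=> u_orth; apply: orth_normal_colinear.
have [p p_tl pe] : exists2 p, mink p p < 0 & mink p e = 0.
  by apply: spacelike_orth_timelike; rewrite e_unit ltr01.
apply: (timelike_orth_span p_tl pe) => x x_tl xe.
have [c c0 cx] := timelike_scale_H3 x_tl.
have /eqP : mink (c *: x) u = 0 by apply: u_orth; split; rewrite ?minkZl ?xe ?mulr0.
by rewrite minkZl mulf_eq0 (negbTE c0) => /eqP.
Qed.

Lemma isometry_plane_normal (f : mat R) : Defs.isometry f -> f \in unitmx ->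
  (forall x, plane e x -> plane e (f *m x)) ->
  exists2 l, l != 0 & e = l *: (f *m e).
Proof.
move=> [f_mink _] f_unit f_plane.
have f_inv_e : f *m (invmx f *m e) = e by rewrite mulKVmx.
have inv_e : invmx f *m e = mink (invmx f *m e) e *: e.
  by apply: plane_orth_colinear => x /f_plane[_ fxe]; rewrite -f_mink f_inv_e.
exists (mink (invmx f *m e) e); last by rewrite scalemxAr -inv_e f_inv_e.
apply: contra_eqN e_unit => /eqP l0.
by rewrite -{1}f_inv_e inv_e -scalemxAr minkZl l0 mul0r eq_sym oner_eq0.
Qed.

End UnitNormal.

Lemma vertical_mulmx e (f : mat R) l y : Defs.isometry f -> e = l *: (f *m e) ->
  vertical e (f *m y) = l *: (f *m vertical e y).
Proof.
move=> [f_mink _] e_fe.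
have fy_e : mink (f *m y) e = l * mink y e by rewrite {1}e_fe minkZr f_mink.
by rewrite /vertical fy_e mulmxDr scalerDr -e_fe -scalemxAr scalerA.
Qed.

Lemma horizE e (Z : vec R -> vec R) x :
  horiz e Z x = orth_comp (vertical e x) (Z x).
Proof. by []. Qed.

Lemma fuchsian_killing_orth_vertical e V x :
  fuchsian_killing e V -> H3 x -> mink (V x) (vertical e x) = 0.
Proof.
move=> [Y [_ YV]] x_H3; have [Vx Ve _] := YV x x_H3.
by rewrite /vertical minkDr minkZr Vx Ve mulr0 addr0.
Qed.

End Minkowski.

Theorem corollary3 (R : realType) (e : vec R) (I : Type) (n : I -> vec R)
    (F : set (mat R)) (Z : vec R -> vec R) (fv : mat R -> vec R -> vec R) :
  fuchsian_polyhedron e n F ->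
  inf_iso_deformation n Z ->
  (forall f, F f -> fuchsian_killing e (fv f)) ->
  (forall f y, F f -> surface n y -> Z (f *m y) = f *m (fv f y + Z y)) ->
  forall f y, F f -> surface n y ->
    horiz e Z (f *m y) = f *m (fv f y + horiz e Z y).
Proof.
move=> [e_unit _ [[_ [_ F_inv]] [F_iso _]] [F_plane _] _] _ fv_killing Z_eq.
move=> f y Ff Py.
have f_iso : Defs.isometry f := (F_iso f Ff).1.
have [l l0 e_fe] : exists2 l, l != 0 & e = l *: (f *m e).
  apply: (isometry_plane_normal e_unit f_iso (F_inv f Ff).1) => x Px.
  by rewrite -(F_plane f Ff); exists x.
have fv_orth := fuchsian_killing_orth_vertical (fv_killing f Ff) Py.1.1.
by rewrite !horizE (vertical_mulmx y f_iso e_fe) orth_compZ // Z_eq //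
  orth_comp_mulmx // orth_compDl.
Qed.
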